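(* Let $X$ be a CAT(0) space, $T:X\to X$, $C\subseteq X$ nonempty and $\varphi:[0,\infty)\to[0,\infty)$ an increasing function vanishing only at $0$. If $T$ is uniformly $(P_2)$ on $C$ with modulus $\varphi$, then for all $x\in C$ and all $z\in C\cap Fix(T)$, $\varphi(d(Tx,z))\le d(x,Tx)\,d(Tx,z)$.
   Context: A geodesic space $(X,d)$ is CAT(0) if for all $z\in X$, all geodesics $\gamma:[a,b]\to X$ and all $t\in[0,1]$, $d^2(z,\gamma((1-t)a+tb))\le(1-t)d^2(z,\gamma(a))+td^2(z,\gamma(b))-t(1-t)d^2(\gamma(a),\gamma(b))$. $T$ is uniformly $(P_2)$ on $C$ with modulus $\varphi$ if $T(C)\subseteq C$ and for all $x,y\in C$: $2d^2(Tx,Ty)\le d^2(x,Ty)+d^2(y,Tx)-d^2(x,Tx)-d^2(y,Ty)-2\varphi(d(Tx,Ty))$. $Fix(T)$ is the fixed point set of $T$. *)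

From Stdlib Require Import Reals.
Open Scope R_scope.

Definition is_metric {X : Type} (d : X -> X -> R) : Prop :=
  (forall x y, 0 <= d x y) /\
  (forall x y, d x y = 0 <-> x = y) /\
  (forall x y, d x y = d y x) /\
  (forall x y z, d x z <= d x y + d y z).

Definition is_geodesic {X : Type} (d : X -> X -> R) (a b : R) (gamma : R -> X) : Prop :=
  a <= b /\
  forall s t, a <= s <= b -> a <= t <= b -> d (gamma s) (gamma t) = Rabs (s - t).

Definition geodesic_space {X : Type} (d : X -> X -> R) : Prop :=
  is_metric d /\
  forall x y, exists gamma : R -> X,
    is_geodesic d 0 (d x y) gamma /\ gamma 0 = x /\ gamma (d x y) = y.

Definition CAT0 {X : Type} (d : X -> X -> R) : Prop :=
  geodesic_space d /\
  forall (z : X) (gamma : R -> X) (a b t : R),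
    is_geodesic d a b gamma -> 0 <= t <= 1 ->
    (d z (gamma ((1 - t) * a + t * b)))^2 <=
      (1 - t) * (d z (gamma a))^2 + t * (d z (gamma b))^2
      - t * (1 - t) * (d (gamma a) (gamma b))^2.

Definition uniformly_P2 {X : Type} (d : X -> X -> R) (T : X -> X)
    (C : X -> Prop) (phi : R -> R) : Prop :=
  (forall x, C x -> C (T x)) /\
  forall x y, C x -> C y ->
    2 * (d (T x) (T y))^2 <=
      (d x (T y))^2 + (d y (T x))^2 - (d x (T x))^2 - (d y (T y))^2
      - 2 * phi (d (T x) (T y)).

Definition Fix {X : Type} (T : X -> X) (z : X) : Prop := T z = z.

Definition is_modulus (phi : R -> R) : Prop :=
  (forall t, 0 <= t -> 0 <= phi t) /\
  (forall s t, 0 <= s -> s <= t -> phi s <= phi t) /\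
  (forall t, 0 <= t -> (phi t = 0 <-> t = 0)).

From Stdlib Require Import Reals Lra Psatz.
Open Scope R_scope.

(* Taking y := z in the (P_2) inequality, where Tz = z, leaves
   2 phi(d(Tx,z)) <= d(x,z)^2 - d(x,Tx)^2 - d(Tx,z)^2, and the triangle
   inequality d(x,z) <= d(x,Tx) + d(Tx,z) bounds the right-hand side by
   2 d(x,Tx) d(Tx,z). *)

Section MetricLemmas.

Context {X : Type} {d : X -> X -> R}.
Hypothesis d_metric : is_metric d.

Lemma metric_self (x : X) : d x x = 0.
Proof. apply d_metric; reflexivity. Qed.

Lemma metric_sym (x y : X) : d x y = d y x.
Proof. apply d_metric. Qed.

Lemma metric_sq_triangle (x y z : X) :
  d x z ^ 2 <= d x y ^ 2 + d y z ^ 2 + 2 * d x y * d y z.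
Proof.
  destruct d_metric as [d_ge0 [_ [_ d_triangle]]].
  pose proof (d_ge0 x z); pose proof (d_triangle x y z).
  nra.
Qed.

Lemma uniformly_P2_at_fixed_point {T : X -> X} {C : X -> Prop} {phi : R -> R}
    {x z : X} :
  uniformly_P2 d T C phi -> C x -> C z -> Fix T z ->
  2 * phi (d (T x) z) <= d x z ^ 2 - d x (T x) ^ 2 - d (T x) z ^ 2.
Proof.
  intros [_ P2] Cx Cz Tz.
  pose proof (P2 x z Cx Cz) as P2xz; unfold Fix in Tz.
  rewrite Tz, metric_self, (metric_sym z (T x)) in P2xz.
  lra.
Qed.

End MetricLemmas.

Theorem lemma4p4 (X : Type) (d : X -> X -> R) (T : X -> X) (C : X -> Prop)
  (phi : R -> R) :
  CAT0 d -> (exists c, C c) -> is_modulus phi -> uniformly_P2 d T C phi ->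
  forall x z, C x -> C z -> Fix T z ->
    phi (d (T x) z) <= d x (T x) * d (T x) z.
Proof.
  intros [[d_metric _] _] _ _ T_P2 x z Cx Cz Tz.
  pose proof (uniformly_P2_at_fixed_point d_metric T_P2 Cx Cz Tz).
  pose proof (metric_sq_triangle d_metric x (T x) z).
  lra.
Qed.
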